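(* Let $G$ be a finite subgroup of $\mathrm{U}(q)$, let $n\ge 1$, and let $\mathcal{H}=(\mathbb{C}^q)^{\otimes n}$, on which $\mathrm{U}(q)$ (and hence $G$) acts by $U\mapsto U^{\otimes n}$. Let $\mathcal{C}\subseteq\mathcal{H}$ be a subspace that transforms in an irreducible representation $\boldsymbol{\lambda}$ of $G$ (with character $\lambda$), and let $E$ be an operator on $\mathcal{H}$ that transforms in an irreducible representation $\boldsymbol{R}$ of $\mathrm{U}(q)$. If $\langle 1, \lambda^* R^{\downarrow}\lambda\rangle = 0$, then the Knill–Laflamme condition holds for $E$ on $\mathcal{C}$: there exists $c_E\in\mathbb{C}$ such that $\langle\psi|E|\phi\rangle = c_E\langle\psi|\phi\rangle$ for all $|\psi\rangle,|\phi\rangle\in\mathcal{C}$.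
   Context: A subspace $\mathcal{C}\subseteq\mathcal{H}$ transforms in the representation $\boldsymbol{\lambda}$ of $G$ if it is invariant under all $g^{\otimes n}$, $g\in G$, and the resulting representation of $G$ on $\mathcal{C}$ is isomorphic to $\boldsymbol{\lambda}$. An operator $E$ on $\mathcal{H}$ transforms in the representation $\boldsymbol{R}$ of $\mathrm{U}(q)$ if $E$ lies in a subspace $W$ of operators on $\mathcal{H}$ that is invariant under conjugation $X\mapsto U^{\otimes n}X(U^{\otimes n})^{\dagger}$ for all $U\in\mathrm{U}(q)$ and such that this conjugation representation of $\mathrm{U}(q)$ on $W$ is isomorphic to $\boldsymbol{R}$. $R^{\downarrow}$ is the character of the restriction of $\boldsymbol{R}$ to $G$, $1$ is the trivial character, $\lambda^*$ is the complex conjugate of $\lambda$, products of characters are pointwise, and $\langle\chi,\psi\rangle:=\frac{1}{|G|}\sum_{g\in G}\overline{\chi(g)}\psi(g)$. *)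

From HB Require Import structures.
From mathcomp Require Import all_boot all_order all_algebra.
From mathcomp Require Import reals.
From mathcomp.real_closed Require Import complex mxtens.

Unset Implicit Arguments.
Unset Strict Implicit.
Unset Printing Implicit Defensive.
Import Order.TTheory GRing.Theory Num.Theory.
Local Open Scope ring_scope.

Section Defs.
Context {R : realType}.
Local Notation C := R[i].

Definition adjmx {m n} (A : 'M[C]_(m, n)) : 'M[C]_(n, m) := (map_mx (@conjc R) A)^T.

Definition unitary {q} (U : 'M[C]_q) : Prop := U *m adjmx U = 1%:M.

Definition tpow {q} (n : nat) (U : 'M[C]_q) : 'M[C]_(q ^ n) := ntensmx U n.

(* Vectors of H are represented as row vectors 'rV_(q^n); an operator A acts on a
   vector v by v |-> v *m A^T (i.e. the column vector A v).  Subspaces of H are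
   row spaces of matrices (mxalgebra). *)
Definition act {N} (A : 'M[C]_N) (v : 'rV[C]_N) : 'rV[C]_N := v *m A^T.

Definition braket {N} (u v : 'rV[C]_N) : C := \sum_(i < N) conjc (u 0 i) * v 0 i.

(* trace of the linear map v |-> v *m A restricted to the row space of V
   (meaningful when the row space of V is invariant under this map). *)
Definition restr_trace {k N} (V : 'M[C]_(k, N)) (A : 'M[C]_N) : C :=
  \tr (row_base V *m A *m pinvmx (row_base V)).

Definition finite_unitary_subgroup {q} (G : seq 'M[C]_q) : Prop :=
  [/\ uniq G, forall g, g \in G -> unitary g, 1%:M \in G &
      forall g h, g \in G -> h \in G -> g *m h \in G].

Definition G_invariant {q} n (G : seq 'M[C]_q) {k} (D : 'M[C]_(k, q ^ n)) : Prop :=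
  forall g, g \in G -> (D *m (tpow n g)^T <= D)%MS.

Definition G_irreducible {q} n (G : seq 'M[C]_q) {k} (Cs : 'M[C]_(k, q ^ n)) : Prop :=
  [/\ Cs != 0, G_invariant n G Cs &
      forall D : 'M[C]_(q ^ n), (D <= Cs)%MS -> G_invariant n G D ->
        D = 0 \/ (D == Cs)%MS].

Definition sub_char {q} n {k} (Cs : 'M[C]_(k, q ^ n)) (g : 'M[C]_q) : C :=
  restr_trace Cs (tpow n g)^T.

(* Operators on H are encoded via mxvec; a space of operators is the row space of a
   matrix W with q^n * q^n columns (operator X belongs to W iff (mxvec X <= W)%MS). *)
Definition conjby {N} (T : 'M[C]_N) (X : 'M[C]_N) : 'M[C]_N := T *m X *m adjmx T.

Definition U_invariant q n {k} (W : 'M[C]_(k, q ^ n * q ^ n)) : Prop :=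
  forall (U : 'M[C]_q), unitary U ->
    forall X : 'M[C]_(q ^ n), (mxvec X <= W)%MS -> (mxvec (conjby (tpow n U) X) <= W)%MS.

Definition U_irreducible q n {k} (W : 'M[C]_(k, q ^ n * q ^ n)) : Prop :=
  [/\ W != 0, U_invariant q n W &
      forall D : 'M[C]_(q ^ n * q ^ n), (D <= W)%MS -> U_invariant q n D ->
        D = 0 \/ (D == W)%MS].

Definition res_char {q} n {k} (W : 'M[C]_(k, q ^ n * q ^ n)) (g : 'M[C]_q) : C :=
  restr_trace W (lin_mx (conjby (tpow n g))).

Definition cfdotG {q} (G : seq 'M[C]_q) (chi psi : 'M[C]_q -> C) : C :=
  (size G)%:R^-1 * \sum_(g <- G) conjc (chi g) * psi g.

End Defs.

From HB Require Import structures.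
From mathcomp Require Import all_boot all_order all_algebra.
From mathcomp Require Import reals.
From mathcomp.real_closed Require Import complex mxtens.
Import GRing.Theory Num.Theory.
Local Open Scope ring_scope.

(* Let B be a basis of C. The compression X |-> conj(B) X B^T, whose entries are
   the matrix elements <b_i|X|b_j>, maps W G-equivariantly to End(C); so its
   restriction to W is a G-fixed vector for the action of G on linear maps from W
   to End(C), whose character is lambda^* R lambda.  Averaging that action over G
   gives |G| times an idempotent of trace |G| <1, lambda^* R lambda> = 0, hence
   zero, and a fixed vector is its own image under it.  So the compression of E
   vanishes and the Knill-Laflamme condition holds with c_E = 0. *)

Section TensorPower.
Context {K : comPzRingType}.

Lemma tens1mx m p : (1%:M : 'M[K]_m) *t (1%:M : 'M[K]_p) = 1%:M.
Proof.
apply/matrixP=> i j.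
case: (mxtens_indexP i)=> i0 i1; case: (mxtens_indexP j)=> j0 j1.
rewrite tensmxE !mxE (can_eq (@mxtens_indexK _ _)) xpair_eqE.
by case: (i0 == j0); case: (i1 == j1); rewrite ?mulr1 ?mulr0 ?mul0r.
Qed.

Lemma ntensmxM q k (A B : 'M[K]_q) : (A *m B) ^t k = A ^t k *m B ^t k.
Proof.
case: k => [|k]; first by rewrite mul1mx.
by elim: k => [|k IHk] //; rewrite !ntensmxSS IHk tensmx_mul.
Qed.

Lemma ntens1mx q k : (1%:M : 'M[K]_q) ^t k = 1%:M.
Proof.
case: k => [|k] //.
by elim: k => [|k IHk] //; rewrite !ntensmxSS IHk tens1mx.
Qed.

Lemma trmx_ntensmx q k (A : 'M[K]_q) : (A ^t k)^T = A^T ^t k.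
Proof.
case: k => [|k]; first by rewrite trmx1.
by elim: k => [|k IHk] //; rewrite !ntensmxSS trmx_tens IHk.
Qed.

Lemma map_ntensmx (f : {rmorphism K -> K}) q k (A : 'M[K]_q) :
  map_mx f (A ^t k) = map_mx f A ^t k.
Proof.
case: k => [|k]; first by rewrite map_mx1.
by elim: k => [|k IHk] //; rewrite !ntensmxSS map_mxT IHk.
Qed.

End TensorPower.

Section Adjoint.
Context {R : realType}.
Local Notation C := R[i].
Local Notation cj := (map_mx (@conjc R)).

Lemma adjmxM m p r (A : 'M[C]_(m, p)) (B : 'M[C]_(p, r)) :
  adjmx (A *m B) = adjmx B *m adjmx A.
Proof. by rewrite /adjmx map_mxM trmx_mul. Qed.

Lemma cjK m p (A : 'M[C]_(m, p)) : cj (cj A) = A.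
Proof. by apply/matrixP=> i j; rewrite !mxE conjcK. Qed.

Lemma tpowM q n (g h : 'M[C]_q) : tpow n (g *m h) = tpow n g *m tpow n h.
Proof. exact: ntensmxM. Qed.

Lemma tpow_adj q n (g : 'M[C]_q) : adjmx (tpow n g) = tpow n (adjmx g).
Proof. by rewrite /adjmx /tpow map_ntensmx trmx_ntensmx. Qed.

Lemma unitary_tpow q n (U : 'M[C]_q) : unitary U -> unitary (tpow n U).
Proof. by rewrite /unitary tpow_adj -tpowM => ->; apply: ntens1mx. Qed.

Lemma unitary_unit q (U : 'M[C]_q) : unitary U -> U \in unitmx.
Proof. by move/mulmx1_unit => []. Qed.

Lemma unitary_trmx_cj q (U : 'M[C]_q) : unitary U -> U^T *m cj U = 1%:M.
Proof. by move/mulmx1C; rewrite -[cj U]trmxK -trmx_mul => ->; rewrite trmx1. Qed.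

Lemma braketE N (u v : 'rV[C]_N) : braket u v = (cj u *m v^T) 0 0.
Proof. by rewrite /braket mxE; apply: eq_bigr => i _; rewrite !mxE. Qed.

Lemma braket_mul_act N k (B : 'M[C]_(k, N)) (a b : 'rV[C]_k) (E : 'M[C]_N) :
  braket (a *m B) (act E (b *m B)) = (cj a *m (cj B *m E *m B^T) *m b^T) 0 0.
Proof. by rewrite braketE /act map_mxM !trmx_mul trmxK !mulmxA. Qed.

End Adjoint.

Section Sandwich.
Context {K : comPzRingType}.

Definition sandwich {a b c d} (M : 'M[K]_(c, a)) (N : 'M[K]_(b, d))
  (X : 'M[K]_(a, b)) : 'M[K]_(c, d) := M *m X *m N.

Fact sandwich_is_semilinear a b c d (M : 'M[K]_(c, a)) (N : 'M[K]_(b, d)) :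
  semilinear (sandwich M N).
Proof.
split=> [k X|X Y]; rewrite /sandwich; first by rewrite -scalemxAr -scalemxAl.
by rewrite mulmxDr mulmxDl.
Qed.

HB.instance Definition _ a b c d (M : 'M[K]_(c, a)) (N : 'M[K]_(b, d)) :=
  GRing.isSemilinear.Build K 'M_(a, b) 'M_(c, d) _ (sandwich M N)
    (@sandwich_is_semilinear a b c d M N).

Definition lin_sandwich {a b c d} (M : 'M[K]_(c, a)) (N : 'M[K]_(b, d)) :=
  lin_mx (sandwich M N).

Lemma mul_vec_sandwich {a b c d} (M : 'M[K]_(c, a)) (N : 'M[K]_(b, d)) X :
  mxvec X *m lin_sandwich M N = mxvec (M *m X *m N).
Proof. exact: mul_vec_lin. Qed.

Lemma lin_sandwichM {a b c d e f} (M : 'M[K]_(c, a)) (N : 'M[K]_(b, d))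
    (M' : 'M[K]_(e, c)) (N' : 'M[K]_(d, f)) :
  lin_sandwich M N *m lin_sandwich M' N' = lin_sandwich (M' *m M) (N *m N').
Proof.
apply/row_matrixP=> j; rewrite !rowE -(vec_mxK (delta_mx 0 j)) mulmxA.
by rewrite !mul_vec_sandwich !mulmxA.
Qed.

Lemma mxtrace_lin_sandwich a b (M : 'M[K]_a) (N : 'M[K]_b) :
  \tr (lin_sandwich M N) = \tr M * \tr N.
Proof.
rewrite /mxtrace (reindex _ (curry_mxvec_bij a b)) /=.
rewrite mulr_suml; under [RHS]eq_bigr do rewrite mulr_sumr.
rewrite pair_bigA; apply: eq_bigr => -[i j] _ /=.
have -> : lin_sandwich M N (mxvec_index i j) (mxvec_index i j) =
    (delta_mx (0 : 'I_1) (mxvec_index i j) *m lin_sandwich M N) 0 (mxvec_index i j).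
  by rewrite -rowE !mxE.
rewrite -mxvec_delta mul_vec_sandwich mxvecE -(mul_delta_mx (0 : 'I_1)).
by rewrite mulmxA -colE -mulmxA -rowE mxE big_ord1 !mxE.
Qed.

End Sandwich.

Section Restriction.
Context {F : fieldType}.

Definition restr_mx {k N} (V : 'M[F]_(k, N)) (A : 'M[F]_N) :=
  row_base V *m A *m pinvmx (row_base V).

Context {k N : nat} (V : 'M[F]_(k, N)).

Lemma row_base_restr_mx A :
  (V *m A <= V)%MS -> row_base V *m A = restr_mx V A *m row_base V.
Proof.
move=> VA; rewrite /restr_mx mulmxKpV // eq_row_base.
by apply: submx_trans VA; rewrite submxMr // eq_row_base.
Qed.

Lemma restr_mxM A B : (V *m A <= V)%MS -> (V *m B <= V)%MS ->
  restr_mx V (A *m B) = restr_mx V A *m restr_mx V B.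
Proof.
move=> VA VB; apply: (row_free_inj (row_base_free V)) => /=.
have VAB : (V *m (A *m B) <= V)%MS.
  by rewrite mulmxA; apply: submx_trans (submxMr _ VA) VB.
rewrite -row_base_restr_mx // -mulmxA -(row_base_restr_mx _ VB).
by rewrite mulmxA [restr_mx V A *m _]mulmxA -(row_base_restr_mx _ VA).
Qed.

End Restriction.

Lemma mxtrace_idem (F : fieldType) m (P : 'M[F]_m) :
  P *m P = P -> \tr P = (\rank P)%:R.
Proof.
move=> PP; move: (row_base_free P) (col_base_full P) (mulmx_base P).
move: (col_base P) (row_base P) => X Y freeY fullX XY.
have XYX : X *m Y *m X = X.
  by apply: (row_free_inj freeY); rewrite /= -mulmxA XY PP.
have [Xr XrX] := row_fullP fullX.
have YX : Y *m X = 1%:M.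
  transitivity (Xr *m (X *m Y *m X)); first by rewrite !mulmxA XrX mul1mx.
  by rewrite XYX.
by rewrite -[in LHS]XY mxtrace_mulC YX mxtrace1.
Qed.

Section GroupAverage.
Context {F : numFieldType} {q m : nat} {G : seq 'M[F]_q}.
Hypotheses (uniq_G : uniq G) (G1 : 1%:M \in G)
  (unit_G : {in G, forall g, g \in unitmx})
  (mul_G : {in G &, forall g h, g *m h \in G}).

Lemma perm_mulmx_group h : h \in G -> perm_eq (map (mulmx h) G) G.
Proof.
move=> hG; have injh : injective (@mulmx _ q q q h).
  by apply: (can_inj (g := mulmx (invmx h))) => x; rewrite mulmxA mulVmx ?unit_G ?mul1mx.
have uniq_hG : uniq (map (mulmx h) G) by rewrite map_inj_uniq.
have sub : {subset map (mulmx h) G <= G} by move=> _ /mapP [g gG ->]; apply: mul_G.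
have [_ eq_hG] := uniq_min_size uniq_hG sub (eq_leq (esym (size_map _ _))).
exact: uniq_perm.
Qed.

Variable rep : 'M[F]_q -> 'M[F]_m.
Hypothesis repM : {in G &, forall g h, rep (g *m h) = rep g *m rep h}.

Let avg := \sum_(g <- G) rep g.

Lemma group_sum_mulmx_idem : avg *m avg = (size G)%:R *: avg.
Proof.
rewrite /avg mulmx_suml scaler_nat -iter_addr_0 -count_predT -big_const_seq.
apply: eq_big_seq => h hG; rewrite mulmx_sumr.
rewrite -[RHS](perm_big _ (perm_mulmx_group _ hG)) big_map.
by apply: eq_big_seq => g gG; rewrite repM.
Qed.

Lemma fixed_rV_eq0 (v : 'rV[F]_m) :
  \sum_(g <- G) \tr (rep g) = 0 -> {in G, forall g, v *m rep g = v} -> v = 0.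
Proof.
move=> tr0 fixv.
have sG : (size G)%:R != 0 :> F.
  by rewrite pnatr_eq0 size_eq0; apply: contraTneq G1 => ->.
pose P := (size G)%:R^-1 *: avg.
have PP : P *m P = P.
  by rewrite -scalemxAl -scalemxAr group_sum_mulmx_idem !scalerA mulfVK.
have P0 : P = 0.
  apply/eqP; rewrite -mxrank_eq0 -(pnatr_eq0 F) -mxtrace_idem //.
  by rewrite mxtraceZ /avg raddf_sum tr0 mulr0.
have vP : v *m P = v.
  rewrite -scalemxAr /avg mulmx_sumr (eq_big_seq (fun=> v)) //.
  by rewrite big_const_seq count_predT iter_addr_0 -scaler_nat scalerA mulVf ?scale1r.
by rewrite -vP P0 mulmx0.
Qed.

End GroupAverage.

Section KnillLaflamme.
Context {R : realType} {q n : nat} {G : seq 'M[R[i]]_q}.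
Context {kC : nat} {Cs : 'M[R[i]]_(kC, q ^ n)}.
Context {kW : nat} {W : 'M[R[i]]_(kW, q ^ n * q ^ n)}.
Hypotheses (subgroup_G : finite_unitary_subgroup G) (Cs_inv : G_invariant n G Cs)
  (W_inv : U_invariant q n W).
Local Notation cj := (map_mx (@conjc R)).
Local Notation B := (row_base Cs).
Implicit Types g h : 'M[R[i]]_q.

Let unitary_G : {in G, forall g, unitary g}.
Proof. by case: subgroup_G. Qed.

Definition sub_rep g := restr_mx Cs (tpow n g)^T.

Definition conj_lin g := lin_sandwich (tpow n g) (adjmx (tpow n g)).

Definition res_rep g := restr_mx W (conj_lin g).

Definition compress_mx := lin_sandwich (cj B) B^T.

(* G acts on the (rank W) x (rank C * rank C) matrices, i.e. on the linear maps
   from W to End(C) written in the bases row_base W and B. *)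
Definition hom_rep g :=
  lin_sandwich (res_rep g) (lin_sandwich (cj (sub_rep g)) (sub_rep g)^T).

Lemma row_base_sub_rep g : g \in G -> B *m (tpow n g)^T = sub_rep g *m B.
Proof. by move=> gG; apply/row_base_restr_mx/Cs_inv. Qed.

Lemma sub_repM g h : g \in G -> h \in G ->
  sub_rep (g *m h) = sub_rep h *m sub_rep g.
Proof. by move=> gG hG; rewrite /sub_rep tpowM trmx_mul restr_mxM //; apply: Cs_inv. Qed.

Lemma W_conj_lin_stable g : g \in G -> (W *m conj_lin g <= W)%MS.
Proof.
move=> gG; apply/row_subP => i; rewrite row_mul -[row i W]vec_mxK mul_vec_sandwich.
by apply: W_inv; [exact: unitary_G | rewrite vec_mxK row_sub].
Qed.

Lemma res_repM g h : g \in G -> h \in G ->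
  res_rep (g *m h) = res_rep h *m res_rep g.
Proof.
move=> gG hG; rewrite /res_rep -restr_mxM ?W_conj_lin_stable //.
by rewrite /conj_lin lin_sandwichM tpowM adjmxM.
Qed.

Lemma hom_repM g h : g \in G -> h \in G ->
  hom_rep (g *m h) = hom_rep g *m hom_rep h.
Proof.
move=> gG hG; rewrite /hom_rep lin_sandwichM (res_repM _ _ gG hG).
rewrite [sub_rep (g *m h)](sub_repM _ _ gG hG); congr (lin_sandwich _ _).
by rewrite lin_sandwichM map_mxM trmx_mul.
Qed.

Lemma mxtrace_hom_rep g :
  \tr (hom_rep g) = conjc (sub_char n Cs g) * res_char n W g * sub_char n Cs g.
Proof.
rewrite !mxtrace_lin_sandwich trace_map_mx mxtrace_tr mulrA.
by rewrite [_ * \tr (res_rep g)]mulrC.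
Qed.

Lemma sub_rep_cj_tpow g : g \in G -> sub_rep g *m B *m cj (tpow n g) = B.
Proof.
move=> gG; rewrite -row_base_sub_rep // -mulmxA.
by rewrite unitary_trmx_cj ?mulmx1 //; apply/unitary_tpow/unitary_G.
Qed.

Lemma conj_lin_compress_mx g : g \in G ->
  conj_lin g *m compress_mx *m lin_sandwich (cj (sub_rep g)) (sub_rep g)^T = compress_mx.
Proof.
move=> gG; rewrite /conj_lin /compress_mx lin_sandwichM (lin_sandwichM (cj B *m _)).
have -> : cj (sub_rep g) *m (cj B *m tpow n g) = cj B.
  by rewrite -[tpow n g]cjK -!map_mxM mulmxA sub_rep_cj_tpow.
have -> // : adjmx (tpow n g) *m B^T *m (sub_rep g)^T = B^T.
by rewrite /adjmx -!trmx_mul mulmxA sub_rep_cj_tpow.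
Qed.

Lemma row_base_compress_mx_fixed g : g \in G ->
  mxvec (row_base W *m compress_mx) *m hom_rep g = mxvec (row_base W *m compress_mx).
Proof.
move=> gG; have /row_base_restr_mx WL := W_conj_lin_stable _ gG.
rewrite mul_vec_sandwich mulmxA -WL.
by rewrite -[in RHS](conj_lin_compress_mx _ gG) !mulmxA.
Qed.

Lemma row_base_compress_mx_eq0 :
  \sum_(g <- G) conjc (sub_char n Cs g) * res_char n W g * sub_char n Cs g = 0 ->
  row_base W *m compress_mx = 0.
Proof.
case: subgroup_G => uniq_G _ G1 mul_G tr0; apply/eqP; rewrite -mxvec_eq0; apply/eqP.
apply: (fixed_rV_eq0 uniq_G G1 _ mul_G _ hom_repM).
- by move=> g /unitary_G/unitary_unit.
- by rewrite -[RHS]tr0; apply: eq_bigr => g _; apply: mxtrace_hom_rep.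
- exact: row_base_compress_mx_fixed.
Qed.

Lemma compress_eq0 E :
  \sum_(g <- G) conjc (sub_char n Cs g) * res_char n W g * sub_char n Cs g = 0 ->
  (mxvec E <= W)%MS -> cj B *m E *m B^T = 0.
Proof.
move=> tr0; rewrite -(eq_row_base W) => /submxP [c cE].
apply/eqP; rewrite -mxvec_eq0 -mul_vec_sandwich -/compress_mx cE -mulmxA.
by rewrite row_base_compress_mx_eq0 ?mulmx0.
Qed.

End KnillLaflamme.

Lemma cfdotG1_eq0 {R : realType} {q} {G : seq 'M[R[i]]_q} {f : 'M_q -> R[i]} :
  G != [::] -> cfdotG G (fun _ => 1) f = 0 -> \sum_(g <- G) f g = 0.
Proof.
rewrite /cfdotG => nzG /eqP; rewrite mulf_eq0 invr_eq0 pnatr_eq0 size_eq0 (negbTE nzG).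
by under eq_bigr do rewrite conjc1 mul1r; move/eqP.
Qed.

Theorem lemma5 (R : realType) (q n : nat) (G : seq 'M[R[i]]_q)
  (kC : nat) (Cs : 'M[R[i]]_(kC, q ^ n))
  (kW : nat) (W : 'M[R[i]]_(kW, q ^ n * q ^ n)) (E : 'M[R[i]]_(q ^ n)) :
  finite_unitary_subgroup G ->
  (1 <= n)%N ->
  G_irreducible n G Cs ->
  U_irreducible q n W ->
  (mxvec E <= W)%MS ->
  cfdotG G (fun _ => 1)
    (fun g => conjc (sub_char n Cs g) * res_char n W g * sub_char n Cs g) = 0 ->
  exists cE : R[i], forall psi phi : 'rV[R[i]]_(q ^ n),
    (psi <= Cs)%MS -> (phi <= Cs)%MS ->
    braket psi (act E phi) = cE * braket psi phi.
Proof.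
move=> subgroup_G _ [_ Cs_inv _] [_ W_inv _] EW dot0.
have nzG : G != [::] by case: subgroup_G => _ _ G1 _; apply: contraTneq G1 => ->.
have compressE := compress_eq0 subgroup_G Cs_inv W_inv E (cfdotG1_eq0 nzG dot0) EW.
exists 0 => psi phi psiC phiC; rewrite mul0r.
have [psiB phiB] : (psi <= row_base Cs)%MS /\ (phi <= row_base Cs)%MS.
  by rewrite !eq_row_base.
by rewrite -(mulmxKpV psiB) -(mulmxKpV phiB) braket_mul_act compressE mulmx0 mul0mx mxE.
Qed.
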